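(* Let $n\in\mathbb{N}$, $1<p<q$, $0<\omega<\omega_{p,q}$, and let $u$ be the positive solution of $$u''+\frac{n-1}{r}u'+f(u)=0\ (r>0),\qquad u'(0)=0,\qquad \lim_{r\to\infty}u(r)=0,$$ with $f(u)=-\omega u+u^p-u^q$. Define $$P(r)=r^n\big[u'(r)^2+2F(u(r))\big]+(n-2)r^{n-1}u(r)u'(r),\qquad F(u)=\int_0^u f(s)\,ds.$$ Then $P(r)>0$ for all $r>0$.
   Context: $\omega_{p,q}=\frac{2(q-p)}{(p+1)(q-1)}\left[\frac{(p-1)(q+1)}{(p+1)(q-1)}\right]^{\frac{p-1}{q-p}}$; for such $\omega$ the positive solution exists and is unique. *)

From Stdlib Require Import Reals Lra.
Open Scope R_scope.

Definition rpow (s a : R) : R := if Rlt_dec 0 s then Rpower s a else 0.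

Definition fnl (omega p q u : R) : R := - omega * u + rpow u p - rpow u q.

(* F(u) = int_0^u f(s) ds, written out in closed form (valid for u >= 0) *)
Definition Fnl (omega p q u : R) : R :=
  - omega * u ^ 2 / 2 + rpow u (p + 1) / (p + 1) - rpow u (q + 1) / (q + 1).

Definition omega_pq (p q : R) : R :=
  2 * (q - p) / ((p + 1) * (q - 1)) *
  Rpower (((p - 1) * (q + 1)) / ((p + 1) * (q - 1))) ((p - 1) / (q - p)).

(* Pohozaev-type function P(r), with u1 the derivative of u *)
Definition Pfun (n : nat) (omega p q : R) (u u1 : R -> R) (r : R) : R :=
  r ^ n * (u1 r ^ 2 + 2 * Fnl omega p q (u r))
  + (INR n - 2) * r ^ (n - 1) * u r * u1 r.

From Stdlib Require Import Reals Lra Lia.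
Open Scope R_scope.

(* Write [f(t) = t kappa(t)] and [G(t) = 2 n F(t) - (n - 2) t f(t)], so that
   [P'(r) = r^(n-1) G(u(r))].  Both [kappa] and [G(t)/t^2] are of the form
   [C + A t^(p-1) + B t^(q-1)], whose derivative changes sign at most once.  Hence
   [kappa] has a first positive zero [beta] (with [F(beta) > 0] exactly because
   [omega < omega_pq]), [f < 0] beyond [beta], and [G] changes sign at most once
   (from [-] to [+]) on (0, beta].  Maximum-principle and energy arguments show that
   [u <= beta] and [u' <= 0], so [G(u(r))] is positive up to some radius and
   nonpositive afterwards: [P] first increases and then decreases.  Since
   [P(0+) = 0] and, thanks to the exponential decay of [u], [P(+oo) = 0], and [P]
   decreases strictly far out, [P > 0] everywhere. *)

(** * Calculus on the real line *)

Lemma derivable_pt_lim_eq (f : R -> R) (x a b : R) :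
  derivable_pt_lim f x a -> a = b -> derivable_pt_lim f x b.
Proof. now intros H <-. Qed.

Lemma derivable_pt_lim_local (f g : R -> R) (x l d : R) : 0 < d ->
  (forall y, Rabs (y - x) < d -> f y = g y) ->
  derivable_pt_lim f x l -> derivable_pt_lim g x l.
Proof.
  intros Hd Hfg Hf eps Heps.
  destruct (Hf eps Heps) as [del Hdel].
  assert (Hm : 0 < Rmin del d) by (apply Rmin_pos; [apply cond_pos | lra]).
  exists (mkposreal _ Hm); intros h Hh Hh2; simpl in Hh2.
  assert (Hh_del : Rabs h < del) by (eapply Rlt_le_trans; [exact Hh2 | apply Rmin_l]).
  assert (Hh_d : Rabs h < d) by (eapply Rlt_le_trans; [exact Hh2 | apply Rmin_r]).
  rewrite <- (Hfg x) by (rewrite Rminus_diag, Rabs_R0; lra).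
  rewrite <- (Hfg (x + h)) by (now replace (x + h - x) with h by ring).
  now apply Hdel.
Qed.

Section Monotonicity.
Variables (g g' : R -> R) (a b : R).
Hypothesis Hder : forall c, a <= c <= b -> derivable_pt_lim g c (g' c).

Lemma le_of_derive_nonneg : a <= b -> (forall c, a < c < b -> 0 <= g' c) -> g a <= g b.
Proof.
  intros Hab Hs; destruct (Rle_lt_or_eq_dec a b Hab) as [Hlt | ->]; [| lra].
  destruct (MVT_cor2 g g' a b Hlt Hder) as [c [E Hc]]; specialize (Hs c Hc); nra.
Qed.

Lemma lt_of_derive_pos : a < b -> (forall c, a < c < b -> 0 < g' c) -> g a < g b.
Proof.
  intros Hlt Hs; destruct (MVT_cor2 g g' a b Hlt Hder) as [c [E Hc]]; specialize (Hs c Hc); nra.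
Qed.

Lemma ge_of_derive_nonpos : a <= b -> (forall c, a < c < b -> g' c <= 0) -> g b <= g a.
Proof.
  intros Hab Hs; destruct (Rle_lt_or_eq_dec a b Hab) as [Hlt | ->]; [| lra].
  destruct (MVT_cor2 g g' a b Hlt Hder) as [c [E Hc]]; specialize (Hs c Hc); nra.
Qed.

Lemma gt_of_derive_neg : a < b -> (forall c, a < c < b -> g' c < 0) -> g b < g a.
Proof.
  intros Hlt Hs; destruct (MVT_cor2 g g' a b Hlt Hder) as [c [E Hc]]; specialize (Hs c Hc); nra.
Qed.

End Monotonicity.

Lemma derive_pos_local (f : R -> R) (x l : R) : derivable_pt_lim f x l -> 0 < l ->
  exists d, 0 < d /\ forall h, 0 < h < d -> f (x - h) < f x < f (x + h).
Proof.
  intros Hf Hl; destruct (Hf (l / 2) ltac:(lra)) as [d Hd].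
  exists d; split; [apply cond_pos |]; intros h [H1 H2].
  assert (Hr := Hd h ltac:(lra) ltac:(rewrite Rabs_right; lra)).
  assert (Hl' := Hd (- h) ltac:(lra) ltac:(rewrite Rabs_left; lra)).
  apply Rabs_def2 in Hr; apply Rabs_def2 in Hl'.
  replace (x - h) with (x + - h) by ring.
  set (qr := (f (x + h) - f x) / h) in Hr; set (ql := (f (x + - h) - f x) / - h) in Hl'.
  assert (f (x + h) - f x = qr * h) by (unfold qr; field; lra).
  assert (f (x + - h) - f x = - (ql * h)) by (unfold ql; field; lra).
  split; nra.
Qed.

Lemma increasing_after_critical (f f1 : R -> R) (x l : R) :
  (forall y, x <= y -> derivable_pt_lim f y (f1 y)) -> f1 x = 0 ->
  derivable_pt_lim f1 x l -> 0 < l ->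
  exists d, 0 < d /\ forall h, 0 < h < d -> f x < f (x + h).
Proof.
  intros Hf H1 Hf1 Hl; destruct (derive_pos_local f1 x l Hf1 Hl) as [d [Hd H]].
  exists d; split; [exact Hd |]; intros h Hh.
  apply (lt_of_derive_pos f f1); [intros c Hc; apply Hf; lra | lra |].
  intros c Hc; destruct (H (c - x) ltac:(lra)) as [_ Hc'].
  now replace (x + (c - x)) with c in Hc' by ring; rewrite H1 in Hc'.
Qed.

Lemma decreasing_after_critical (f f1 : R -> R) (x l : R) :
  (forall y, x <= y -> derivable_pt_lim f y (f1 y)) -> f1 x = 0 ->
  derivable_pt_lim f1 x l -> l < 0 ->
  exists d, 0 < d /\ forall h, 0 < h < d -> f (x + h) < f x.
Proof.
  intros Hf H1 Hf1 Hl.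
  destruct (increasing_after_critical (fun y => - f y) (fun y => - f1 y) x (- l)) as [d [Hd H]].
  - intros y Hy; exact (derivable_pt_lim_opp _ _ _ (Hf y Hy)).
  - rewrite H1; ring.
  - exact (derivable_pt_lim_opp _ _ _ Hf1).
  - lra.
  - exists d; split; [exact Hd |]; intros h Hh; specialize (H h Hh); lra.
Qed.

Lemma derive_zero_at_max (f : R -> R) (a b x l : R) : a < x < b ->
  derivable_pt_lim f x l -> (forall y, a < y < b -> f y <= f x) -> l = 0.
Proof.
  intros Hx Hf Hmax.
  rewrite <- (derive_pt_eq_0 f x l (exist _ l Hf) Hf).
  apply (deriv_maximum f a b); try lra; intros y Hy1 Hy2; now apply Hmax.
Qed.

Lemma derive_zero_at_min (f : R -> R) (a b x l : R) : a < x < b ->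
  derivable_pt_lim f x l -> (forall y, a < y < b -> f x <= f y) -> l = 0.
Proof.
  intros Hx Hf Hmin.
  rewrite <- (derive_pt_eq_0 f x l (exist _ l Hf) Hf).
  apply (deriv_minimum f a b); try lra; intros y Hy1 Hy2; now apply Hmin.
Qed.

Definition right_cont (f : R -> R) (a : R) : Prop :=
  forall eps, 0 < eps -> exists delta, 0 < delta /\
    forall x, a < x < a + delta -> Rabs (f x - f a) < eps.

Section Clamp.
Variables (f f' : R -> R) (a : R).
Hypothesis Hcont : right_cont f a.
Hypothesis Hder : forall x, a < x -> derivable_pt_lim f x (f' x).

(* [fun x => f (Rmax a x)] extends [f] by the constant [f a] to the left of [a]. *)
Lemma continuity_pt_clamp c : a <= c -> continuity_pt (fun x => f (Rmax a x)) c.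
Proof.
  intros Hc eps Heps; destruct (Rle_lt_or_eq_dec a c Hc) as [Hlt | <-].
  - assert (Hfc : continuity_pt f c).
    { apply derivable_continuous_pt; exists (f' c); apply Hder, Hlt. }
    destruct (Hfc eps Heps) as [d [Hd H]].
    exists (Rmin d (c - a)); split; [apply Rmin_pos; lra |]; intros y [_ Hy]; simpl in Hy |- *.
    unfold R_dist in Hy |- *.
    assert (Rmin d (c - a) <= d) by apply Rmin_l; assert (Rmin d (c - a) <= c - a) by apply Rmin_r.
    apply Rabs_def2 in Hy; rewrite !Rmax_right by lra.
    destruct (Req_dec y c) as [-> | Hne]; [rewrite Rminus_diag, Rabs_R0; lra |].
    apply H; split; [split; [exact I | auto] |]; simpl; unfold R_dist; apply Rabs_def1; lra.
  - destruct (Hcont eps Heps) as [d [Hd H]].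
    exists d; split; [exact Hd |]; intros y [_ Hy]; simpl in Hy |- *; unfold R_dist in Hy |- *.
    rewrite (Rmax_left a a) by lra.
    destruct (Rle_or_lt y a) as [Hy0 | Hy0].
    + rewrite Rmax_left, Rminus_diag, Rabs_R0 by lra; lra.
    + rewrite Rmax_right by lra; apply H; apply Rabs_def2 in Hy; lra.
Qed.

Lemma derivable_pt_lim_clamp c : a < c -> derivable_pt_lim (fun x => f (Rmax a x)) c (f' c).
Proof.
  intros Hc; apply (derivable_pt_lim_local f _ c (f' c) (c - a)); [lra | | apply Hder, Hc].
  intros y Hy; apply Rabs_def2 in Hy; rewrite Rmax_right by lra; reflexivity.
Qed.

Lemma MVT_right_cont b : a < b -> exists c, a < c < b /\ f b - f a = f' c * (b - a).
Proof.
  intros Hab; set (g := fun x => f (Rmax a x)).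
  set (pr := fun c (Hc : a < c < b) => exist _ (f' c) (derivable_pt_lim_clamp c (proj1 Hc))
    : derivable_pt g c).
  destruct (MVT g id a b pr (fun c _ => derivable_pt_id c) Hab) as [c [Hc E]].
  - intros c Hc; apply continuity_pt_clamp; lra.
  - intros c _; apply derivable_continuous_pt, derivable_pt_id.
  - exists c; split; [exact Hc |].
    rewrite (derive_pt_eq_0 _ _ _ _ (derivable_pt_lim_clamp c (proj1 Hc))) in E.
    rewrite derive_pt_id in E; unfold g, id in E.
    rewrite (Rmax_right a b), (Rmax_left a a) in E by lra; nra.
Qed.

Lemma attains_max_right b : a <= b ->
  exists M, a <= M <= b /\ forall c, a <= c <= b -> f c <= f M.
Proof.
  intros Hab; destruct (continuity_ab_maj (fun x => f (Rmax a x)) a b Hab) as [M [HM HMab]].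
  { intros c Hc; apply continuity_pt_clamp; lra. }
  exists M; split; [exact HMab |]; intros c Hc; specialize (HM c Hc); simpl in HM.
  now rewrite !Rmax_right in HM by lra.
Qed.

Lemma attains_min_right b : a <= b ->
  exists M, a <= M <= b /\ forall c, a <= c <= b -> f M <= f c.
Proof.
  intros Hab; destruct (continuity_ab_min (fun x => f (Rmax a x)) a b Hab) as [M [HM HMab]].
  { intros c Hc; apply continuity_pt_clamp; lra. }
  exists M; split; [exact HMab |]; intros c Hc; specialize (HM c Hc); simpl in HM.
  now rewrite !Rmax_right in HM by lra.
Qed.

End Clamp.

Lemma right_cont_comp (g f : R -> R) (a : R) :
  right_cont f a -> continuity_pt g (f a) -> right_cont (fun x => g (f x)) a.
Proof.
  intros Hf Hg eps He; destruct (Hg eps He) as [d1 [Hd1 Hg']].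
  destruct (Hf d1 Hd1) as [d [Hd H]]; exists d; split; [exact Hd |]; intros x Hx.
  destruct (Req_dec (f x) (f a)) as [-> | Hne]; [rewrite Rminus_diag, Rabs_R0; lra |].
  apply (Hg' (f x)); split; [split; [exact I | auto] | now apply H].
Qed.

Definition vanishes_at_0 (g : R -> R) : Prop :=
  forall eps, 0 < eps -> exists delta, 0 < delta /\ forall s, 0 < s < delta -> Rabs (g s) < eps.

Lemma neg_of_decreasing_vanishing (g : R -> R) (d : R) : vanishes_at_0 g ->
  (forall a b, 0 < a < b -> b < d -> g b < g a) -> forall r, 0 < r < d -> g r < 0.
Proof.
  intros Hg Hdec r Hr.
  assert (Hhalf : g (r / 2) <= 0).
  { apply Rnot_lt_le; intros Hpos.
    destruct (Hg (g (r / 2)) Hpos) as [delta [Hdelta H]].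
    set (s := Rmin delta (r / 2) / 2).
    assert (Rmin delta (r / 2) <= delta) by apply Rmin_l.
    assert (Rmin delta (r / 2) <= r / 2) by apply Rmin_r.
    assert (0 < Rmin delta (r / 2)) by (apply Rmin_pos; lra).
    assert (Hs := H s ltac:(unfold s; lra)); apply Rabs_def2 in Hs.
    assert (g (r / 2) < g s) by (apply Hdec; unfold s; lra); lra. }
  assert (g r < g (r / 2)) by (apply Hdec; lra); lra.
Qed.

Lemma pos_of_increasing_vanishing (g : R -> R) (d : R) : vanishes_at_0 g ->
  (forall a b, 0 < a < b -> b < d -> g a < g b) -> forall r, 0 < r < d -> 0 < g r.
Proof.
  intros Hg Hinc r Hr.
  enough (- g r < 0) by lra.
  apply (neg_of_decreasing_vanishing (fun x => - g x) d); [| | exact Hr].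
  - intros eps Heps; destruct (Hg eps Heps) as [delta [Hd H]].
    exists delta; split; [exact Hd |]; intros s Hs; rewrite Rabs_Ropp; now apply H.
  - intros a b Hab Hb; specialize (Hinc a b Hab Hb); lra.
Qed.

Lemma nonneg_of_nondecreasing_near0 (g : R -> R) (r : R) :
  (forall x y, 0 < x <= y -> y <= r -> g x <= g y) ->
  (forall delta, 0 < delta -> exists e0, 0 < e0 /\ forall e, 0 < e < e0 -> - delta < g e) ->
  0 < r -> 0 <= g r.
Proof.
  intros Hmon Hlow Hr; apply Rnot_lt_le; intros Hneg.
  destruct (Hlow (- g r) ltac:(lra)) as [e0 [He0 H]].
  set (e := Rmin e0 r / 2).
  assert (Rmin e0 r <= e0) by apply Rmin_l; assert (Rmin e0 r <= r) by apply Rmin_r.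
  assert (0 < Rmin e0 r) by (apply Rmin_pos; lra).
  specialize (H e ltac:(unfold e; lra)); specialize (Hmon e r ltac:(unfold e; lra) ltac:(lra)); lra.
Qed.

Lemma nonneg_of_nonincreasing_far (g : R -> R) (r : R) :
  (forall x y, r <= x <= y -> g y <= g x) ->
  (forall delta A, 0 < delta -> exists R, A < R /\ - delta < g R) ->
  0 <= g r.
Proof.
  intros Hmon Hlow; apply Rnot_lt_le; intros Hneg.
  destruct (Hlow (- g r) r ltac:(lra)) as [R [HR H]].
  specialize (Hmon r R ltac:(lra)); lra.
Qed.

Lemma Rpower_pos (x y : R) : 0 < Rpower x y.
Proof. apply exp_pos. Qed.

Lemma Rpower_one (a : R) : Rpower 1 a = 1.
Proof. unfold Rpower; now rewrite ln_1, Rmult_0_r, exp_0. Qed.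

Lemma Rpower_le_1 (t a : R) : 0 < t <= 1 -> 0 <= a -> Rpower t a <= 1.
Proof. intros Ht Ha; rewrite <- (Rpower_one a); apply Rle_Rpower_l; lra. Qed.

(** * Sums of two powers *)

Section PowerSum.
Variables p q : R.
Hypothesis Hp : 1 < p.
Hypothesis Hpq : p < q.

(* [psum' t = t^(p-2) (A0 + B0 t^(q-p))] with a monotone second factor, so [psum]
   changes monotonicity at most once on (0, +oo). *)
Definition psum (C0 A0 B0 t : R) : R :=
  C0 + A0 / (p - 1) * Rpower t (p - 1) + B0 / (q - 1) * Rpower t (q - 1).

Definition psum_slope (A0 B0 t : R) : R := A0 + B0 * Rpower t (q - p).

Lemma psum_derive C0 A0 B0 t : 0 < t ->
  derivable_pt_lim (psum C0 A0 B0) t (Rpower t (p - 2) * psum_slope A0 B0 t).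
Proof.
  intros Ht; unfold psum, psum_slope.
  eapply derivable_pt_lim_eq.
  - apply derivable_pt_lim_plus; [apply derivable_pt_lim_plus |].
    + apply derivable_pt_lim_const.
    + apply derivable_pt_lim_scal, derivable_pt_lim_power, Ht.
    + apply derivable_pt_lim_scal, derivable_pt_lim_power, Ht.
  - replace (p - 1 - 1) with (p - 2) by ring.
    replace (q - 1 - 1) with ((p - 2) + (q - p)) by ring.
    rewrite Rpower_plus; field; split; lra.
Qed.

Lemma psum_opp C0 A0 B0 t : psum (- C0) (- A0) (- B0) t = - psum C0 A0 B0 t.
Proof. unfold psum; field; split; lra. Qed.

Lemma psum_MVT C0 A0 B0 x y : 0 < x < y -> exists c, x < c < y /\
  psum C0 A0 B0 y - psum C0 A0 B0 x = Rpower c (p - 2) * (y - x) * psum_slope A0 B0 c.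
Proof.
  intros Hxy.
  destruct (MVT_cor2 (psum C0 A0 B0) (fun t => Rpower t (p - 2) * psum_slope A0 B0 t) x y)
    as [c [E Hc]]; [lra | intros c Hc; apply psum_derive; lra |].
  exists c; split; [exact Hc | rewrite E; ring].
Qed.

Lemma psum_slope_lt A0 B0 x y : B0 < 0 -> 0 < x < y -> psum_slope A0 B0 y < psum_slope A0 B0 x.
Proof.
  intros HB Hxy; unfold psum_slope.
  assert (Rpower x (q - p) < Rpower y (q - p)) by (apply Rlt_Rpower_l; lra); nra.
Qed.

Lemma psum_slope_le A0 B0 x y : B0 <= 0 -> 0 < x < y -> psum_slope A0 B0 y <= psum_slope A0 B0 x.
Proof.
  intros HB Hxy; unfold psum_slope.
  assert (Rpower x (q - p) < Rpower y (q - p)) by (apply Rlt_Rpower_l; lra); nra.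
Qed.

Lemma psum_quasiconcave_strict C0 A0 B0 x y z : B0 < 0 -> 0 < x < y -> y < z ->
  psum C0 A0 B0 x < psum C0 A0 B0 y \/ psum C0 A0 B0 z < psum C0 A0 B0 y.
Proof.
  intros HB Hxy Hyz.
  destruct (Rlt_or_le (psum C0 A0 B0 x) (psum C0 A0 B0 y)) as [H | H1]; [now left |].
  destruct (Rlt_or_le (psum C0 A0 B0 z) (psum C0 A0 B0 y)) as [H | H2]; [now right |].
  exfalso.
  destruct (psum_MVT C0 A0 B0 x y Hxy) as [c1 [Hc1 E1]].
  destruct (psum_MVT C0 A0 B0 y z ltac:(lra)) as [c2 [Hc2 E2]].
  assert (Hs : psum_slope A0 B0 c2 < psum_slope A0 B0 c1) by (apply psum_slope_lt; lra).
  set (w1 := Rpower c1 (p - 2) * (y - x)) in E1; set (w2 := Rpower c2 (p - 2) * (z - y)) in E2.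
  assert (0 < w1) by (apply Rmult_lt_0_compat; [apply Rpower_pos | lra]).
  assert (0 < w2) by (apply Rmult_lt_0_compat; [apply Rpower_pos | lra]).
  set (s1 := psum_slope A0 B0 c1) in *; set (s2 := psum_slope A0 B0 c2) in *.
  assert (s1 <= 0) by (destruct (Rle_or_lt s1 0); [auto | nra]).
  assert (0 <= s2) by (destruct (Rle_or_lt 0 s2); [auto | nra]).
  lra.
Qed.

Lemma psum_quasiconcave C0 A0 B0 x y z : B0 <= 0 -> 0 < x < y -> y < z ->
  Rmin (psum C0 A0 B0 x) (psum C0 A0 B0 z) <= psum C0 A0 B0 y.
Proof.
  intros HB Hxy Hyz; apply Rnot_lt_le; intros H.
  assert (H1 : psum C0 A0 B0 y < psum C0 A0 B0 x) by (eapply Rlt_le_trans; [exact H | apply Rmin_l]).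
  assert (H2 : psum C0 A0 B0 y < psum C0 A0 B0 z) by (eapply Rlt_le_trans; [exact H | apply Rmin_r]).
  destruct (psum_MVT C0 A0 B0 x y Hxy) as [c1 [Hc1 E1]].
  destruct (psum_MVT C0 A0 B0 y z ltac:(lra)) as [c2 [Hc2 E2]].
  assert (Hs : psum_slope A0 B0 c2 <= psum_slope A0 B0 c1) by (apply psum_slope_le; lra).
  set (w1 := Rpower c1 (p - 2) * (y - x)) in E1; set (w2 := Rpower c2 (p - 2) * (z - y)) in E2.
  assert (0 < w1) by (apply Rmult_lt_0_compat; [apply Rpower_pos | lra]).
  assert (0 < w2) by (apply Rmult_lt_0_compat; [apply Rpower_pos | lra]).
  set (s1 := psum_slope A0 B0 c1) in *; set (s2 := psum_slope A0 B0 c2) in *.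
  assert (s1 < 0) by (destruct (Rlt_or_le s1 0); [auto | nra]).
  assert (0 < s2) by (destruct (Rlt_or_le 0 s2); [auto | nra]).
  lra.
Qed.

Lemma psum_quasiconvex C0 A0 B0 x y z : 0 <= B0 -> 0 < x < y -> y < z ->
  psum C0 A0 B0 y <= Rmax (psum C0 A0 B0 x) (psum C0 A0 B0 z).
Proof.
  intros HB Hxy Hyz.
  assert (H := psum_quasiconcave (- C0) (- A0) (- B0) x y z ltac:(lra) Hxy Hyz).
  rewrite !psum_opp in H.
  unfold Rmin, Rmax in *; destruct Rle_dec, Rle_dec; lra.
Qed.

End PowerSum.

(** * The nonlinearity *)

Section Nonlinearity.
Variables (p q om : R).
Hypothesis Hp : 1 < p.
Hypothesis Hpq : p < q.
Hypothesis Hom0 : 0 < om.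

Definition fpq (t : R) : R := - om * t + Rpower t p - Rpower t q.
Definition Fpq (t : R) : R :=
  - om * t ^ 2 / 2 + Rpower t (p + 1) / (p + 1) - Rpower t (q + 1) / (q + 1).

(* [fpq t = t * kappa t] *)
Definition kappa (t : R) : R := psum p q (- om) (p - 1) (- (q - 1)) t.

Lemma fnl_eq t : 0 < t -> fnl om p q t = fpq t.
Proof.
  intros Ht; unfold fnl, fpq, rpow; destruct (Rlt_dec 0 t); [reflexivity | lra].
Qed.

Lemma Fnl_eq t : 0 < t -> Fnl om p q t = Fpq t.
Proof.
  intros Ht; unfold Fnl, Fpq, rpow; destruct (Rlt_dec 0 t); [reflexivity | lra].
Qed.

Lemma kappa_eq t : kappa t = - om + Rpower t (p - 1) - Rpower t (q - 1).
Proof. unfold kappa, psum; field; split; lra. Qed.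

Lemma Rpower_add1 t a : 0 < t -> Rpower t (1 + a) = t * Rpower t a.
Proof. intros Ht; rewrite Rpower_plus, Rpower_1; auto. Qed.

Lemma Rpower_add2 t a : 0 < t -> Rpower t (2 + a) = t ^ 2 * Rpower t a.
Proof.
  intros Ht; rewrite Rpower_plus; replace 2 with (INR 2) at 1 by (simpl; ring).
  now rewrite Rpower_pow.
Qed.

Lemma fpq_kappa t : 0 < t -> fpq t = t * kappa t.
Proof.
  intros Ht; rewrite kappa_eq; unfold fpq.
  replace p with (1 + (p - 1)) at 1 by ring; replace q with (1 + (q - 1)) at 1 by ring.
  rewrite !Rpower_add1 by exact Ht; ring.
Qed.

Lemma Fpq_factor t : 0 < t ->
  Fpq t = t ^ 2 * (- om / 2 + Rpower t (p - 1) / (p + 1) - Rpower t (q - 1) / (q + 1)).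
Proof.
  intros Ht; unfold Fpq.
  replace (p + 1) with (2 + (p - 1)) at 1 by ring; replace (q + 1) with (2 + (q - 1)) at 1 by ring.
  rewrite !Rpower_add2 by exact Ht; field; split; lra.
Qed.

Lemma Fpq_derive t : 0 < t -> derivable_pt_lim Fpq t (fpq t).
Proof.
  intros Ht; unfold Fpq, fpq; eapply derivable_pt_lim_eq.
  - apply derivable_pt_lim_minus; [apply derivable_pt_lim_plus |].
    + apply (derivable_pt_lim_ext (fun x => - om / 2 * x ^ 2)); [intros x; field |].
      apply derivable_pt_lim_scal, derivable_pt_lim_pow.
    + apply (derivable_pt_lim_ext (fun x => / (p + 1) * Rpower x (p + 1))); [intros x; field; lra |].
      apply derivable_pt_lim_scal, derivable_pt_lim_power, Ht.
    + apply (derivable_pt_lim_ext (fun x => / (q + 1) * Rpower x (q + 1))); [intros x; field; lra |].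
      apply derivable_pt_lim_scal, derivable_pt_lim_power, Ht.
  - replace (p + 1 - 1) with p by ring; replace (q + 1 - 1) with q by ring; simpl; field; lra.
Qed.

Lemma fpq_continuity t : 0 < t -> continuity_pt fpq t.
Proof.
  intros Ht; apply derivable_continuous_pt; eexists; unfold fpq.
  apply derivable_pt_lim_minus; [apply derivable_pt_lim_plus |].
  - apply (derivable_pt_lim_ext (fun y => - om * y)); [intros; ring |].
    apply derivable_pt_lim_scal, derivable_pt_lim_id.
  - apply derivable_pt_lim_power, Ht.
  - apply derivable_pt_lim_power, Ht.
Qed.

Lemma Fpq_continuity t : 0 < t -> continuity_pt Fpq t.
Proof. intros Ht; apply derivable_continuous_pt; eexists; now apply Fpq_derive. Qed.

Lemma Rpower_small (eta : R) : 0 < eta -> exists tau, 0 < tau <= 1 /\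
  forall t, 0 < t <= tau -> Rpower t (p - 1) <= eta /\ Rpower t (q - 1) <= eta.
Proof.
  intros He; set (s := Rpower eta (/ (p - 1))).
  exists (Rmin 1 s); split; [split; [apply Rmin_pos; [lra | apply Rpower_pos] | apply Rmin_l] |].
  intros t [Ht1 Ht2].
  assert (Ht1' : t <= 1) by (eapply Rle_trans; [exact Ht2 | apply Rmin_l]).
  assert (A : Rpower t (p - 1) <= eta).
  { apply Rle_trans with (Rpower s (p - 1)).
    - apply Rle_Rpower_l; [lra |]; split; [lra |]; eapply Rle_trans; [exact Ht2 | apply Rmin_r].
    - unfold s; rewrite Rpower_mult; replace (/ (p - 1) * (p - 1)) with 1 by (field; lra).
      rewrite Rpower_1; lra. }
  split; [exact A |].
  replace (q - 1) with ((p - 1) + (q - p)) by ring; rewrite Rpower_plus.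
  assert (Rpower t (q - p) <= 1) by (apply Rpower_le_1; lra).
  assert (0 < Rpower t (p - 1)) by apply Rpower_pos.
  assert (0 < Rpower t (q - p)) by apply Rpower_pos; nra.
Qed.

Lemma near_zero_signs : exists tau, 0 < tau <= 1 /\ forall t, 0 < t <= tau ->
  kappa t <= - om / 2 /\ Fpq t < 0.
Proof.
  destruct (Rpower_small (om / 2) ltac:(lra)) as [tau [Htau H]].
  exists tau; split; [exact Htau |]; intros t Ht; destruct (H t Ht) as [X Y].
  assert (Y0 : 0 < Rpower t (q - 1)) by apply Rpower_pos.
  split; [rewrite kappa_eq; lra |].
  rewrite Fpq_factor by lra.
  assert (Rpower t (p - 1) / (p + 1) <= om / 4).
  { apply Rmult_le_reg_r with (p + 1); [lra |]; field_simplify; [| lra]; nra. }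
  assert (0 < Rpower t (q - 1) / (q + 1)) by (apply Rdiv_lt_0_compat; lra).
  assert (0 < t ^ 2) by (apply pow_lt; lra); nra.
Qed.

Lemma Fpq_bound t : 0 < t <= 1 -> Rabs (Fpq t) <= (om / 2 + 1) * t ^ 2.
Proof.
  intros Ht; rewrite Fpq_factor by lra.
  assert (X := Rpower_le_1 t (p - 1) Ht ltac:(lra)).
  assert (Y := Rpower_le_1 t (q - 1) Ht ltac:(lra)).
  assert (A1 : 0 < Rpower t (p - 1) / (p + 1) <= 1).
  { split; [apply Rdiv_lt_0_compat; [apply Rpower_pos | lra] |].
    apply Rmult_le_reg_r with (p + 1); [lra |]; field_simplify; lra. }
  assert (A2 : 0 < Rpower t (q - 1) / (q + 1) <= 1).
  { split; [apply Rdiv_lt_0_compat; [apply Rpower_pos | lra] |].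
    apply Rmult_le_reg_r with (q + 1); [lra |]; field_simplify; lra. }
  rewrite Rabs_mult, (Rabs_right (t ^ 2)) by (apply Rle_ge, pow_le; lra).
  rewrite Rmult_comm; apply Rmult_le_compat_r; [apply pow_le; lra |].
  apply Rabs_le; lra.
Qed.

Lemma Fpq_lower_bound t T : 0 < t <= T -> - (om * T ^ 2 / 2 + Rpower T (q + 1)) <= Fpq t.
Proof.
  intros Ht; unfold Fpq.
  assert (Rpower t (q + 1) <= Rpower T (q + 1)) by (apply Rle_Rpower_l; lra).
  assert (t ^ 2 <= T ^ 2) by (apply pow_incr; lra).
  assert (0 < Rpower t (p + 1) / (p + 1)) by (apply Rdiv_lt_0_compat; [apply Rpower_pos | lra]).
  assert (0 < Rpower t (q + 1)) by apply Rpower_pos.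
  assert (Rpower t (q + 1) / (q + 1) <= Rpower t (q + 1)).
  { apply Rmult_le_reg_r with (q + 1); [lra |]; field_simplify; nra. }
  nra.
Qed.

(* The only place where [om < omega_pq p q] enters: [F] is positive at
   [t0 = K^(1/(q-p))], where [F(t0) / t0^2 = (omega_pq p q - om) / 2]. *)
Lemma Fpq_pos_somewhere : om < omega_pq p q -> exists t0, 0 < t0 /\ 0 < Fpq t0.
Proof.
  intros Hom.
  set (K := ((p - 1) * (q + 1)) / ((p + 1) * (q - 1))).
  assert (HK : 0 < K) by (unfold K; apply Rdiv_lt_0_compat; nra).
  set (t0 := Rpower K (/ (q - p))).
  assert (Ht0 : 0 < t0) by apply Rpower_pos.
  exists t0; split; [exact Ht0 |].
  rewrite Fpq_factor by exact Ht0; apply Rmult_lt_0_compat; [apply pow_lt, Ht0 |].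
  set (X := Rpower K ((p - 1) / (q - p))).
  assert (E1 : Rpower t0 (p - 1) = X).
  { unfold t0, X; rewrite Rpower_mult; f_equal; field; lra. }
  assert (E2 : Rpower t0 (q - 1) = X * K).
  { replace (q - 1) with ((p - 1) + (q - p)) by ring; rewrite Rpower_plus, E1; f_equal.
    unfold t0; rewrite Rpower_mult; replace (/ (q - p) * (q - p)) with 1 by (field; lra).
    apply Rpower_1, HK. }
  assert (Eo : omega_pq p q = 2 * (q - p) / ((p + 1) * (q - 1)) * X) by reflexivity.
  rewrite E1, E2.
  replace (- om / 2 + X / (p + 1) - X * K / (q + 1)) with ((omega_pq p q - om) / 2)
    by (rewrite Eo; unfold K; field; split; lra).
  lra.
Qed.

Lemma kappa_neg_large t : 1 < t -> kappa t < 0.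
Proof.
  intros Ht; rewrite kappa_eq.
  replace (q - 1) with ((p - 1) + (q - p)) by ring; rewrite Rpower_plus.
  assert (1 < Rpower t (q - p)) by (rewrite <- (Rpower_one (q - p)); apply Rlt_Rpower_l; lra).
  assert (0 < Rpower t (p - 1)) by apply Rpower_pos; nra.
Qed.

Lemma kappa_root : om < omega_pq p q ->
  exists c beta, 0 < c < beta /\ 0 < kappa c /\ kappa beta = 0.
Proof.
  intros Hom.
  destruct near_zero_signs as [tau [Htau Hsmall]].
  destruct (Fpq_pos_somewhere Hom) as [t0 [Ht0 HF0]].
  set (e := Rmin tau (t0 / 2)).
  assert (He : 0 < e) by (apply Rmin_pos; lra).
  assert (e <= tau) by apply Rmin_l; assert (e <= t0 / 2) by apply Rmin_r.
  destruct (Hsmall e ltac:(lra)) as [_ HFe].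
  destruct (MVT_cor2 Fpq fpq e t0 ltac:(lra)) as [c [Ec Hc]].
  { intros x Hx; apply Fpq_derive; lra. }
  assert (Hfc : 0 < fpq c) by nra.
  assert (Hkc : 0 < kappa c) by (rewrite fpq_kappa in Hfc by lra; nra).
  set (L := Rmax c 1 + 1).
  assert (HL1 : 1 < L) by (unfold L; assert (Hm := Rmax_r c 1); lra).
  assert (HLc : c < L) by (unfold L; assert (Hm := Rmax_l c 1); lra).
  destruct (Ranalysis5.IVT_interv (fun t => - kappa t) c L) as [beta [Hb1 Hb2]]; [| exact HLc | lra | |].
  { intros a Ha; apply continuity_pt_opp, derivable_continuous_pt; eexists.
    apply psum_derive; lra. }
  { assert (Hk := kappa_neg_large L HL1); lra. }
  exists c, beta; split; [| split; [exact Hkc | lra]].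
  destruct (Rle_lt_or_eq_dec c beta (proj1 Hb1)) as [Hlt | <-]; lra.
Qed.

Section Threshold.
Variables c beta : R.
Hypothesis Hcb : 0 < c < beta.
Hypothesis Hkc : 0 < kappa c.
Hypothesis Hkb : kappa beta = 0.

Lemma fpq_root : fpq beta = 0.
Proof. rewrite fpq_kappa, Hkb by lra; ring. Qed.

Lemma fpq_neg_above_root t : beta < t -> fpq t < 0.
Proof.
  intros Ht; rewrite fpq_kappa by lra.
  destruct (psum_quasiconcave_strict p q Hp Hpq (- om) (p - 1) (- (q - 1)) c beta t
    ltac:(lra) ltac:(lra) Ht) as [H | H]; fold (kappa c) (kappa beta) (kappa t) in H; nra.
Qed.

Lemma root_le_of_Fpq_nonneg t : 0 < t -> 0 <= Fpq t -> fpq t <= 0 -> beta <= t.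
Proof.
  intros Ht HFt Hft; apply Rnot_lt_le; intros Hlt.
  assert (Hkt : kappa t <= 0) by (rewrite fpq_kappa in Hft by exact Ht; nra).
  assert (Hneg : forall s, 0 < s < t -> fpq s < 0).
  { intros s Hs; rewrite fpq_kappa by lra.
    destruct (psum_quasiconcave_strict p q Hp Hpq (- om) (p - 1) (- (q - 1)) s t beta
      ltac:(lra) ltac:(lra) Hlt) as [H | H]; fold (kappa s) (kappa t) (kappa beta) in H; nra. }
  destruct near_zero_signs as [tau [Htau Hsmall]].
  set (e := Rmin tau (t / 2)).
  assert (He : 0 < e) by (apply Rmin_pos; lra).
  assert (e <= tau) by apply Rmin_l; assert (e <= t / 2) by apply Rmin_r.
  destruct (Hsmall e ltac:(lra)) as [_ HFe].
  assert (Fpq t < Fpq e); [| lra].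
  apply (gt_of_derive_neg Fpq fpq e t); [intros x Hx; apply Fpq_derive; lra | lra |].
  intros x Hx; apply Hneg; lra.
Qed.

Lemma Fpq_root_pos : om < omega_pq p q -> 0 < Fpq beta.
Proof.
  intros Hom; destruct (Fpq_pos_somewhere Hom) as [t0 [Ht0 HF0]].
  destruct (Rtotal_order t0 beta) as [Hlt | [<- | Hgt]]; [| exact HF0 |].
  - assert (Hft0 : 0 < fpq t0).
    { apply Rnot_le_lt; intros Hle; assert (beta <= t0) by (apply root_le_of_Fpq_nonneg; lra); lra. }
    assert (Hkt0 : 0 < kappa t0) by (rewrite fpq_kappa in Hft0 by exact Ht0; nra).
    assert (Fpq t0 < Fpq beta); [| lra].
    apply (lt_of_derive_pos Fpq fpq); [intros x Hx; apply Fpq_derive; lra | exact Hlt |].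
    intros x Hx; rewrite fpq_kappa by lra.
    destruct (psum_quasiconcave_strict p q Hp Hpq (- om) (p - 1) (- (q - 1)) t0 x beta
      ltac:(lra) ltac:(lra) ltac:(lra)) as [H | H];
      fold (kappa t0) (kappa x) (kappa beta) in H; nra.
  - assert (Fpq t0 < Fpq beta); [| lra].
    apply (gt_of_derive_neg Fpq fpq beta t0); [intros x Hx; apply Fpq_derive; lra | exact Hgt |].
    intros x Hx; apply fpq_neg_above_root; lra.
Qed.

End Threshold.

Variable n : nat.

(* The Pohozaev function satisfies [P'(r) = r^(n-1) Gpq (u r)]. *)
Definition Gpq (t : R) : R := 2 * INR n * Fpq t - (INR n - 2) * t * fpq t.

(* [Gpq t = t^2 * hpq t] *)
Definition hcoef_p : R := 2 * INR n / (p + 1) - (INR n - 2).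
Definition hcoef_q : R := (INR n - 2) - 2 * INR n / (q + 1).
Definition hpq (t : R) : R := psum p q (- 2 * om) (hcoef_p * (p - 1)) (hcoef_q * (q - 1)) t.

Lemma hpq_eq t : hpq t = - 2 * om + hcoef_p * Rpower t (p - 1) + hcoef_q * Rpower t (q - 1).
Proof. unfold hpq, psum; field; split; lra. Qed.

Lemma Gpq_hpq t : 0 < t -> Gpq t = t ^ 2 * hpq t.
Proof.
  intros Ht; unfold Gpq; rewrite Fpq_factor, fpq_kappa, hpq_eq, kappa_eq by exact Ht.
  unfold hcoef_p, hcoef_q; field; split; lra.
Qed.

Lemma hpq_neg_near0 : exists tau, 0 < tau /\ forall t, 0 < t <= tau -> hpq t < 0.
Proof.
  set (a := Rabs hcoef_p); set (b := Rabs hcoef_q).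
  assert (Ha := Rabs_pos hcoef_p); assert (Hb := Rabs_pos hcoef_q).
  set (eta := om / (a + b + 1)).
  assert (He : 0 < eta) by (apply Rdiv_lt_0_compat; unfold a, b; lra).
  assert (E : eta * (a + b + 1) = om) by (unfold eta; field; unfold a, b; lra).
  destruct (Rpower_small eta He) as [tau [Htau H]].
  exists tau; split; [lra |]; intros t Ht; destruct (H t Ht) as [X Y].
  assert (X0 : 0 < Rpower t (p - 1)) by apply Rpower_pos.
  assert (Y0 : 0 < Rpower t (q - 1)) by apply Rpower_pos.
  rewrite hpq_eq.
  assert (hcoef_p * Rpower t (p - 1) <= a * eta).
  { assert (hcoef_p <= a) by apply Rle_abs; unfold a in *; nra. }
  assert (hcoef_q * Rpower t (q - 1) <= b * eta).
  { assert (hcoef_q <= b) by apply Rle_abs; unfold b in *; nra. }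
  nra.
Qed.

(* On (0, beta], [hpq] is quasiconcave (if [hcoef_q <= 0]) or quasiconvex and negative
   near 0 (if [hcoef_q > 0]); since [hpq beta > 0] it changes sign at most once there. *)
Lemma Gpq_pos_persists beta t t' : (1 <= n)%nat -> 0 < beta -> fpq beta = 0 -> 0 < Fpq beta ->
  0 < t -> t <= t' -> t' <= beta -> 0 < Gpq t -> 0 < Gpq t'.
Proof.
  intros Hn Hb Hfb HFb Ht Htt Htb HG.
  assert (Hhb : 0 < hpq beta).
  { assert (HN : 1 <= INR n) by (apply (le_INR 1), Hn).
    assert (E := Gpq_hpq beta Hb); unfold Gpq in E; rewrite Hfb in E.
    assert (0 < beta ^ 2) by (apply pow_lt; lra); nra. }
  rewrite Gpq_hpq in HG |- * by lra.
  assert (Hht : 0 < hpq t) by (assert (0 < t ^ 2) by (apply pow_lt; lra); nra).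
  apply Rmult_lt_0_compat; [apply pow_lt; lra |].
  destruct (Rle_lt_or_eq_dec t t' Htt) as [Hlt | <-]; [| exact Hht].
  destruct (Rle_lt_or_eq_dec t' beta Htb) as [Hlt2 | ->]; [| exact Hhb].
  destruct (Rle_or_lt hcoef_q 0) as [Hq | Hq].
  - assert (H := psum_quasiconcave p q Hp Hpq (- 2 * om) (hcoef_p * (p - 1)) (hcoef_q * (q - 1))
      t t' beta ltac:(nra) ltac:(lra) Hlt2).
    fold (hpq t) (hpq t') (hpq beta) in H.
    assert (0 < Rmin (hpq t) (hpq beta)) by (apply Rmin_pos; lra); lra.
  - destruct hpq_neg_near0 as [tau [Htau Hsmall]].
    set (e := Rmin tau (t / 2)).
    assert (He : 0 < e) by (apply Rmin_pos; lra).
    assert (Het : e <= tau) by apply Rmin_l; assert (Het2 : e <= t / 2) by apply Rmin_r.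
    assert (Hhe := Hsmall e ltac:(lra)).
    assert (H := psum_quasiconvex p q Hp Hpq (- 2 * om) (hcoef_p * (p - 1)) (hcoef_q * (q - 1))
      e t t' ltac:(nra) ltac:(lra) Hlt).
    fold (hpq e) (hpq t) (hpq t') in H.
    apply Rnot_le_lt; intros Hle.
    assert (Rmax (hpq e) (hpq t') <= 0) by (apply Rmax_lub; lra); lra.
Qed.


End Nonlinearity.

(** * The radial equation *)

Lemma pow_le_1 (s : R) (k : nat) : 0 <= s <= 1 -> s ^ k <= 1.
Proof. intros Hs; rewrite <- (pow1 k); apply pow_incr; lra. Qed.

Lemma pow_pred_mult (k : nat) (r : R) : INR k * r ^ Nat.pred k * r = INR k * r ^ k.
Proof. destruct k; simpl; ring. Qed.

Section RadialODE.
Variables (m : nat) (p q om : R) (u u1 u2 : R -> R).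
Hypothesis Hp : 1 < p.
Hypothesis Hpq : p < q.
Hypothesis Hom0 : 0 < om.
Hypothesis Hpos : forall r, 0 <= r -> 0 < u r.
Hypothesis Hd1 : forall r, 0 < r -> derivable_pt_lim u r (u1 r).
Hypothesis Hd2 : forall r, 0 < r -> derivable_pt_lim u1 r (u2 r).
Hypothesis Hode : forall r, 0 < r ->
  u2 r + (INR (S m) - 1) / r * u1 r + fnl om p q (u r) = 0.
Hypothesis H0 : forall eps, 0 < eps -> exists delta, 0 < delta /\
  forall h, 0 < h < delta -> Rabs ((u h - u 0) / h) < eps.
Hypothesis Hinf : forall eps, 0 < eps -> exists M, forall r, M < r -> Rabs (u r) < eps.

Let f := fpq p q om.
Let F := Fpq p q om.

Lemma ode_u2 r : 0 < r -> u2 r = - (INR m / r) * u1 r - f (u r).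
Proof.
  intros Hr; assert (H := Hode r Hr).
  rewrite fnl_eq, S_INR in H by (apply Hpos; lra); unfold f; lra.
Qed.

Lemma u_right_cont : right_cont u 0.
Proof.
  intros eps He; destruct (H0 1 ltac:(lra)) as [d [Hd H]].
  exists (Rmin d eps); split; [apply Rmin_pos; lra |]; intros h Hh.
  assert (h < d) by (eapply Rlt_le_trans; [apply Hh | rewrite Rplus_0_l; apply Rmin_l]).
  assert (h < eps) by (eapply Rlt_le_trans; [apply Hh | rewrite Rplus_0_l; apply Rmin_r]).
  assert (A := H h ltac:(lra)).
  replace (u h - u 0) with ((u h - u 0) / h * h) by (field; lra).
  rewrite Rabs_mult, (Rabs_right h) by lra; nra.
Qed.

Lemma u_MVT0 h : 0 < h -> exists c, 0 < c < h /\ u h - u 0 = u1 c * h.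
Proof.
  intros Hh; destruct (MVT_right_cont u u1 0 u_right_cont Hd1 h Hh) as [c [Hc E]].
  exists c; split; [exact Hc | rewrite E; ring].
Qed.

Definition energy (r : R) : R := / 2 * (u1 r * u1 r) + F (u r).

Lemma energy_derive r : 0 < r -> derivable_pt_lim energy r (- (INR m / r) * (u1 r * u1 r)).
Proof.
  intros Hr; unfold energy; eapply derivable_pt_lim_eq.
  - apply derivable_pt_lim_plus.
    + apply derivable_pt_lim_scal, derivable_pt_lim_mult; apply Hd2, Hr.
    + apply (derivable_pt_lim_comp u F); [apply Hd1, Hr | apply Fpq_derive; [lra | lra | apply Hpos; lra]].
  - rewrite ode_u2 by exact Hr; unfold f, F; field; lra.
Qed.

Lemma energy_nonincreasing a b : 0 < a -> a <= b -> energy b <= energy a.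
Proof.
  intros Ha Hab; apply (ge_of_derive_nonpos energy (fun x => - (INR m / x) * (u1 x * u1 x)));
    [intros c Hc; apply energy_derive; lra | exact Hab |].
  intros c Hc.
  assert (0 <= INR m / c) by (apply Rmult_le_pos; [apply pos_INR | apply Rlt_le, Rinv_0_lt_compat; lra]).
  assert (0 <= u1 c * u1 c) by nra; nra.
Qed.

(* [energy] is nonincreasing and its liminf at infinity is [>= 0],
   since [F(u) = O(u^2)] and [u -> 0]. *)
Lemma energy_nonneg r : 0 < r -> 0 <= energy r.
Proof.
  intros Hr; apply Rnot_lt_le; intros Hlt.
  set (eta := - energy r).
  set (tau := Rmin 1 (eta / (om + 2))).
  assert (Htau : 0 < tau) by (apply Rmin_pos; [lra | apply Rdiv_lt_0_compat; unfold eta; lra]).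
  assert (tau <= 1) by apply Rmin_l; assert (Ht2 : tau <= eta / (om + 2)) by apply Rmin_r.
  destruct (Hinf tau Htau) as [M HM].
  set (s := Rmax M r + 1).
  assert (Hs1 : M < s) by (unfold s; assert (HX := Rmax_l M r); lra).
  assert (Hs2 : r < s) by (unfold s; assert (HX := Rmax_r M r); lra).
  assert (A := HM s Hs1); assert (Hus : 0 < u s) by (apply Hpos; lra).
  rewrite Rabs_right in A by lra.
  assert (B := Fpq_bound p q om Hp Hpq Hom0 (u s) ltac:(lra)); fold F in B.
  assert (C := energy_nonincreasing r s Hr ltac:(lra)).
  assert (Es : energy s = / 2 * (u1 s * u1 s) + F (u s)) by reflexivity.
  assert (D : (om / 2 + 1) * u s ^ 2 < eta / 2).
  { assert (u s ^ 2 <= u s) by (simpl; nra).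
    apply Rle_lt_trans with ((om / 2 + 1) * u s); [apply Rmult_le_compat_l; lra |].
    apply Rlt_le_trans with ((om / 2 + 1) * tau); [apply Rmult_lt_compat_l; lra |].
    apply Rle_trans with ((om / 2 + 1) * (eta / (om + 2))); [apply Rmult_le_compat_l; lra |].
    right; field; lra. }
  assert (B2 := Rle_abs (- F (u s))); rewrite Rabs_Ropp in B2.
  assert (0 <= u1 s * u1 s) by nra; unfold eta in *; lra.
Qed.

Definition w (r : R) : R := r ^ m * u1 r.

Lemma w_derive r : 0 < r -> derivable_pt_lim w r (- r ^ m * f (u r)).
Proof.
  intros Hr; unfold w; eapply derivable_pt_lim_eq.
  - apply derivable_pt_lim_mult; [apply derivable_pt_lim_pow | apply Hd2, Hr].
  - rewrite ode_u2 by exact Hr.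
    replace (INR m * r ^ Nat.pred m) with (INR m * r ^ Nat.pred m * r / r) by (field; lra).
    rewrite pow_pred_mult; field; lra.
Qed.

Lemma fpq_bound t T : 0 < t <= T -> Rabs (f t) <= om * T + Rpower T p + Rpower T q.
Proof.
  intros Ht; unfold f, fpq.
  assert (Rpower t p <= Rpower T p) by (apply Rle_Rpower_l; lra).
  assert (Rpower t q <= Rpower T q) by (apply Rle_Rpower_l; lra).
  assert (0 < Rpower t p) by apply Rpower_pos.
  assert (0 < Rpower t q) by apply Rpower_pos.
  apply Rabs_le; nra.
Qed.

Lemma w_small_near0 r eta : 0 < r < 1 -> 0 < eta -> exists s, 0 < s < r /\ Rabs (w s) < eta.
Proof.
  intros Hr He; destruct (H0 eta He) as [d [Hd Hq]].
  set (h := Rmin d r / 2).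
  assert (0 < Rmin d r) by (apply Rmin_pos; lra).
  assert (Rmin d r <= d) by apply Rmin_l; assert (Rmin d r <= r) by apply Rmin_r.
  destruct (u_MVT0 h ltac:(unfold h; lra)) as [s [Hs E]].
  exists s; split; [unfold h in Hs; lra |].
  assert (Hu1 : Rabs (u1 s) < eta).
  { replace (u1 s) with ((u h - u 0) / h) by (rewrite E; field; unfold h; lra).
    apply Hq; unfold h; lra. }
  unfold w; rewrite Rabs_mult, (Rabs_right (s ^ m)) by (apply Rle_ge, pow_le; lra).
  assert (s ^ m <= 1) by (apply pow_le_1; unfold h in Hs; lra).
  assert (0 <= s ^ m) by (apply pow_le; lra).
  assert (0 <= Rabs (u1 s)) by apply Rabs_pos; nra.
Qed.

Lemma u_bounded_near0 : exists d0, 0 < d0 <= 1 /\ forall r, 0 < r < d0 -> u r <= u 0 + 1.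
Proof.
  destruct (u_right_cont 1 ltac:(lra)) as [d [Hd H]].
  exists (Rmin d 1); split; [split; [apply Rmin_pos; lra | apply Rmin_r] |]; intros r Hr.
  assert (Rmin d 1 <= d) by apply Rmin_l.
  assert (A := H r ltac:(lra)); apply Rabs_def2 in A; lra.
Qed.

(* Since [w' = O(r^(n-1))] and [w] is small at points arbitrarily close to 0,
   [|u'(r)| <= K r]. *)
Lemma u1_linear_bound : exists d0 K, 0 < d0 <= 1 /\ 0 <= K /\
  forall r, 0 < r < d0 -> Rabs (u1 r) <= K * r.
Proof.
  destruct u_bounded_near0 as [d0 [Hd0 Hub]].
  set (T := u 0 + 1).
  assert (HT : 0 < T) by (unfold T; assert (H := Hpos 0 ltac:(lra)); lra).
  set (K := om * T + Rpower T p + Rpower T q).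
  assert (HK : 0 <= K).
  { unfold K; assert (0 < Rpower T p) by apply Rpower_pos.
    assert (0 < Rpower T q) by apply Rpower_pos; nra. }
  exists d0, K; split; [exact Hd0 | split; [exact HK |]]; intros r Hr.
  assert (Hinc : forall s, 0 < s < r -> Rabs (w r - w s) <= K * r ^ m * (r - s)).
  { intros s Hs.
    destruct (MVT_cor2 w (fun x => - x ^ m * f (u x)) s r ltac:(lra)) as [c [Ec Hc]].
    { intros x Hx; apply w_derive; lra. }
    rewrite Ec, !Rabs_mult, Rabs_Ropp, (Rabs_right (r - s)), (Rabs_right (c ^ m))
      by (try apply Rle_ge, pow_le; lra).
    assert (c ^ m <= r ^ m) by (apply pow_incr; lra).
    assert (Rabs (f (u c)) <= K) by (apply fpq_bound; split; [apply Hpos; lra | apply Hub; lra]).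
    assert (0 <= c ^ m) by (apply pow_le; lra).
    assert (0 <= Rabs (f (u c))) by apply Rabs_pos.
    assert (c ^ m * Rabs (f (u c)) <= r ^ m * K) by (apply Rmult_le_compat; auto).
    assert (0 <= r - s) by lra; nra. }
  assert (Hw : Rabs (w r) <= K * r ^ m * r).
  { apply Rnot_lt_le; intros Hlt.
    destruct (w_small_near0 r (Rabs (w r) - K * r ^ m * r) ltac:(lra) ltac:(lra)) as [s [Hs Hws]].
    assert (A := Hinc s Hs).
    assert (Rabs (w r) <= Rabs (w r - w s) + Rabs (w s)).
    { replace (w r) with ((w r - w s) + w s) at 1 by ring; apply Rabs_triang. }
    assert (0 <= K * r ^ m) by (apply Rmult_le_pos; [exact HK | apply pow_le; lra]).
    assert (K * r ^ m * (r - s) <= K * r ^ m * r) by (apply Rmult_le_compat_l; lra); lra. }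
  unfold w in Hw; rewrite Rabs_mult, (Rabs_right (r ^ m)) in Hw by (apply Rle_ge, pow_le; lra).
  assert (0 < r ^ m) by (apply pow_lt; lra).
  apply Rmult_le_reg_l with (r ^ m); [lra | nra].
Qed.

Lemma u1_vanishes : vanishes_at_0 u1.
Proof.
  intros eps He; destruct u1_linear_bound as [d0 [K [Hd0 [HK H]]]].
  exists (Rmin d0 (eps / (K + 1))); split; [apply Rmin_pos; [lra | apply Rdiv_lt_0_compat; lra] |].
  intros s Hs.
  assert (s < d0) by (eapply Rlt_le_trans; [apply Hs | apply Rmin_l]).
  assert (Hse : s < eps / (K + 1)) by (eapply Rlt_le_trans; [apply Hs | apply Rmin_r]).
  apply Rle_lt_trans with (K * s); [apply H; lra |].
  apply Rle_lt_trans with ((K + 1) * s); [nra |].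
  apply Rlt_le_trans with ((K + 1) * (eps / (K + 1))); [apply Rmult_lt_compat_l; lra |].
  right; field; lra.
Qed.

Lemma w_vanishes : vanishes_at_0 w.
Proof.
  intros eps He; destruct (u1_vanishes eps He) as [d [Hd H]].
  exists (Rmin d 1); split; [apply Rmin_pos; lra |]; intros s Hs.
  assert (s < d) by (eapply Rlt_le_trans; [apply Hs | apply Rmin_l]).
  assert (s < 1) by (eapply Rlt_le_trans; [apply Hs | apply Rmin_r]).
  unfold w; rewrite Rabs_mult, (Rabs_right (s ^ m)) by (apply Rle_ge, pow_le; lra).
  assert (s ^ m <= 1) by (apply pow_le_1; lra).
  assert (0 <= s ^ m) by (apply pow_le; lra).
  assert (Rabs (u1 s) < eps) by (apply H; lra).
  assert (0 <= Rabs (u1 s)) by apply Rabs_pos; nra.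
Qed.

Lemma Fu_right_cont : right_cont (fun x => F (u x)) 0.
Proof.
  apply right_cont_comp; [exact u_right_cont |].
  apply Fpq_continuity; [lra | lra | apply Hpos; lra].
Qed.

Lemma fu_right_cont : right_cont (fun x => f (u x)) 0.
Proof.
  apply right_cont_comp; [exact u_right_cont |].
  apply fpq_continuity; apply Hpos; lra.
Qed.

(* [energy r -> F(u 0)] as [r -> 0+], because [u' -> 0]. *)
Lemma Fu0_nonneg : 0 <= F (u 0).
Proof.
  apply Rnot_lt_le; intros Hlt.
  set (eta := - F (u 0) / 2).
  destruct (Fu_right_cont eta ltac:(unfold eta; lra)) as [d1 [Hdelta1 HF]].
  destruct (u1_vanishes (Rmin 1 eta) ltac:(apply Rmin_pos; unfold eta; lra)) as [d2 [Hdelta2 Hu1]].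
  set (r := Rmin d1 d2 / 2).
  assert (0 < Rmin d1 d2) by (apply Rmin_pos; lra).
  assert (Rmin d1 d2 <= d1) by apply Rmin_l; assert (Rmin d1 d2 <= d2) by apply Rmin_r.
  assert (E := energy_nonneg r ltac:(unfold r; lra)); unfold energy in E.
  assert (A := HF r ltac:(unfold r; lra)); apply Rabs_def2 in A.
  assert (B := Hu1 r ltac:(unfold r; lra)).
  assert (Rmin 1 eta <= 1) by apply Rmin_l; assert (Rmin 1 eta <= eta) by apply Rmin_r.
  assert (u1 r * u1 r <= eta).
  { assert (Hsq : Rabs (u1 r) * Rabs (u1 r) <= 1 * eta).
    { apply Rmult_le_compat; try apply Rabs_pos; lra. }
    rewrite <- Rabs_mult, Rabs_right in Hsq by nra; lra. }
  unfold eta in *; lra.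
Qed.

Lemma u_below_u0_near0 : 0 < f (u 0) -> exists d, 0 < d /\ forall h, 0 < h < d -> u h < u 0.
Proof.
  intros Hf; destruct (fu_right_cont (f (u 0)) Hf) as [d [Hd Hfu]].
  assert (Hw : forall r, 0 < r < d -> w r < 0).
  { apply (neg_of_decreasing_vanishing w d w_vanishes); intros a b Hab Hb.
    apply (gt_of_derive_neg w (fun x => - x ^ m * f (u x))); [intros x Hx; apply w_derive; lra | lra |].
    intros x Hx; assert (0 < x ^ m) by (apply pow_lt; lra).
    assert (A := Hfu x ltac:(lra)); apply Rabs_def2 in A; nra. }
  exists d; split; [exact Hd |]; intros h Hh.
  destruct (u_MVT0 h ltac:(lra)) as [c [Hc E]].
  assert (Hwc := Hw c ltac:(lra)); unfold w in Hwc.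
  assert (0 < c ^ m) by (apply pow_lt; lra).
  assert (u1 c < 0) by nra; nra.
Qed.

Lemma u_above_u0_near0 : f (u 0) < 0 -> exists d, 0 < d /\ forall h, 0 < h < d -> u 0 < u h.
Proof.
  intros Hf; destruct (fu_right_cont (- f (u 0)) ltac:(lra)) as [d [Hd Hfu]].
  assert (Hw : forall r, 0 < r < d -> 0 < w r).
  { apply (pos_of_increasing_vanishing w d w_vanishes); intros a b Hab Hb.
    apply (lt_of_derive_pos w (fun x => - x ^ m * f (u x))); [intros x Hx; apply w_derive; lra | lra |].
    intros x Hx; assert (0 < x ^ m) by (apply pow_lt; lra).
    assert (A := Hfu x ltac:(lra)); apply Rabs_def2 in A; nra. }
  exists d; split; [exact Hd |]; intros h Hh.
  destruct (u_MVT0 h ltac:(lra)) as [c [Hc E]].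
  assert (Hwc := Hw c ltac:(lra)); unfold w in Hwc.
  assert (0 < c ^ m) by (apply pow_lt; lra).
  assert (0 < u1 c) by nra; nra.
Qed.

Definition pohozaev (r : R) : R :=
  r ^ S m * (u1 r * u1 r + 2 * F (u r)) + (INR (S m) - 2) * (r ^ m * (u r * u1 r)).

Lemma Pfun_pohozaev r : 0 < r -> Pfun (S m) om p q u u1 r = pohozaev r.
Proof.
  intros Hr; unfold Pfun, pohozaev; rewrite Fnl_eq by (apply Hpos; lra).
  replace (S m - 1)%nat with m by lia; unfold F; ring.
Qed.

Lemma pohozaev_derive r : 0 < r ->
  derivable_pt_lim pohozaev r (r ^ m * Gpq p q om (S m) (u r)).
Proof.
  intros Hr; unfold pohozaev; eapply derivable_pt_lim_eq.
  - apply derivable_pt_lim_plus.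
    + apply derivable_pt_lim_mult; [apply derivable_pt_lim_pow |].
      apply derivable_pt_lim_plus; [apply derivable_pt_lim_mult; apply Hd2, Hr |].
      apply derivable_pt_lim_scal, (derivable_pt_lim_comp u F); [apply Hd1, Hr |].
      apply Fpq_derive; [lra | lra | apply Hpos; lra].
    + apply derivable_pt_lim_scal, derivable_pt_lim_mult; [apply derivable_pt_lim_pow |].
      apply derivable_pt_lim_mult; [apply Hd1, Hr | apply Hd2, Hr].
  - rewrite ode_u2 by exact Hr.
    replace (INR m * r ^ Nat.pred m) with (INR m * r ^ Nat.pred m * r / r) by (field; lra).
    rewrite pow_pred_mult; unfold Gpq; fold f F; rewrite S_INR; simpl Nat.pred; simpl pow.
    field; lra.
Qed.

Lemma pohozaev_near0 delta : 0 < delta ->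
  exists e0, 0 < e0 /\ forall e, 0 < e < e0 -> - delta < pohozaev e.
Proof.
  intros Hdel.
  destruct u1_linear_bound as [d1 [K [Hd1' [HK Hu1]]]].
  destruct u_bounded_near0 as [d2 [Hd2' Hub]].
  set (T := u 0 + 1).
  assert (HT : 0 < T) by (unfold T; assert (H := Hpos 0 ltac:(lra)); lra).
  set (CF := om * T ^ 2 / 2 + Rpower T (q + 1)).
  assert (HCF : 0 <= CF).
  { unfold CF; assert (0 < Rpower T (q + 1)) by apply Rpower_pos.
    assert (0 < T ^ 2) by (apply pow_lt; lra); nra. }
  assert (HN := Rabs_pos (INR (S m) - 2)).
  set (C := 2 * CF + Rabs (INR (S m) - 2) * T * K + 1).
  assert (HC : 0 < C).
  { unfold C; assert (0 <= Rabs (INR (S m) - 2) * T * K) by (repeat apply Rmult_le_pos; lra); lra. }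
  set (e0 := Rmin (Rmin d1 d2) (delta / C)).
  assert (He0 : 0 < e0) by (apply Rmin_pos; [apply Rmin_pos; lra | apply Rdiv_lt_0_compat; lra]).
  exists e0; split; [exact He0 |]; intros e He.
  assert (e0 <= Rmin d1 d2) by apply Rmin_l; assert (HeC : e0 <= delta / C) by apply Rmin_r.
  assert (Rmin d1 d2 <= d1) by apply Rmin_l; assert (Rmin d1 d2 <= d2) by apply Rmin_r.
  assert (B1 := Hu1 e ltac:(lra)); assert (B2 := Hub e ltac:(lra)); fold T in B2.
  assert (Hue : 0 < u e) by (apply Hpos; lra).
  assert (A1 : - CF <= F (u e)) by (apply Fpq_lower_bound; lra).
  assert (Hem : e ^ m <= 1) by (apply pow_le_1; lra).
  assert (Hem0 : 0 < e ^ m) by (apply pow_lt; lra).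
  assert (A2 : - 2 * CF * e <= e ^ S m * (u1 e * u1 e + 2 * F (u e))).
  { simpl pow; assert (0 <= u1 e * u1 e) by nra.
    assert (e ^ m * (- 2 * CF) <= e ^ m * (u1 e * u1 e + 2 * F (u e)))
      by (apply Rmult_le_compat_l; lra).
    assert (- 2 * CF <= e ^ m * (- 2 * CF)) by nra; nra. }
  assert (A3 : Rabs ((INR (S m) - 2) * (e ^ m * (u e * u1 e)))
               <= Rabs (INR (S m) - 2) * T * K * e).
  { rewrite !Rabs_mult, (Rabs_right (e ^ m)), (Rabs_right (u e)) by lra.
    assert (0 <= Rabs (u1 e)) by apply Rabs_pos.
    assert (e ^ m * (u e * Rabs (u1 e)) <= 1 * (T * (K * e))).
    { apply Rmult_le_compat; try lra; [apply Rmult_le_pos; lra | apply Rmult_le_compat; lra]. }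
    nra. }
  assert (A4 := Rle_abs (- ((INR (S m) - 2) * (e ^ m * (u e * u1 e))))); rewrite Rabs_Ropp in A4.
  assert (C * e < delta).
  { apply Rlt_le_trans with (C * (delta / C)); [apply Rmult_lt_compat_l; lra |].
    right; field; lra. }
  unfold pohozaev, C in *; nra.
Qed.

Section BelowThreshold.
Variable beta : R.
Hypothesis Hb0 : 0 < beta.
Hypothesis Habove : forall t, beta < t -> f t < 0.
Hypothesis Hbelow : forall t, 0 < t -> 0 <= F t -> f t <= 0 -> beta <= t.

(* A maximum of [u] above [beta] would be a point where [u'' = - f(u) > 0]. *)
Lemma u_le_threshold r : 0 <= r -> u r <= beta.
Proof.
  intros Hr; apply Rnot_lt_le; intros Hlt.
  destruct (Hinf beta Hb0) as [M0 HM0].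
  set (R0 := Rmax M0 r + 1).
  assert (HR1 : M0 < R0) by (unfold R0; assert (HX := Rmax_l M0 r); lra).
  assert (HR2 : r < R0) by (unfold R0; assert (HX := Rmax_r M0 r); lra).
  assert (HuR : u R0 < beta) by (assert (A := HM0 R0 HR1); apply Rabs_def2 in A; lra).
  destruct (attains_max_right u u1 0 u_right_cont Hd1 R0 ltac:(lra)) as [x [Hx Hmax]].
  assert (Hux : beta < u x) by (assert (A := Hmax r ltac:(lra)); lra).
  assert (HxR : x < R0) by (destruct (Rle_lt_or_eq_dec x R0 (proj2 Hx)); [auto | subst; lra]).
  destruct (Rle_lt_or_eq_dec 0 x (proj1 Hx)) as [Hx0 | <-].
  - assert (Hc : u1 x = 0).
    { apply (derive_zero_at_max u 0 R0 x); [lra | apply Hd1, Hx0 |].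
      intros y Hy; apply Hmax; lra. }
    assert (Hu2 : 0 < u2 x) by (rewrite ode_u2, Hc by exact Hx0; specialize (Habove (u x) Hux); lra).
    destruct (increasing_after_critical u u1 x (u2 x)) as [d [Hd Hinc]];
      [intros y Hy; apply Hd1; lra | exact Hc | apply Hd2, Hx0 | exact Hu2 |].
    set (h := Rmin d (R0 - x) / 2).
    assert (0 < Rmin d (R0 - x)) by (apply Rmin_pos; lra).
    assert (Rmin d (R0 - x) <= d) by apply Rmin_l; assert (Rmin d (R0 - x) <= R0 - x) by apply Rmin_r.
    assert (A := Hinc h ltac:(unfold h; lra)); assert (B := Hmax (x + h) ltac:(unfold h; lra)); lra.
  - destruct (u_above_u0_near0 (Habove (u 0) Hux)) as [d [Hd Hinc]].
    set (h := Rmin d R0 / 2).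
    assert (0 < Rmin d R0) by (apply Rmin_pos; lra).
    assert (Rmin d R0 <= d) by apply Rmin_l; assert (Rmin d R0 <= R0) by apply Rmin_r.
    assert (A := Hinc h ltac:(unfold h; lra)); assert (B := Hmax h ltac:(unfold h; lra)); lra.
Qed.

(* At a minimum point [x], [F(u x) >= 0] by the energy (as [u' x = 0]) and
   [f(u x) <= 0] by minimality (else [u'' x < 0]). *)
Lemma threshold_le_at_min x r0 : 0 <= x < r0 ->
  (forall c, 0 <= c <= r0 -> u x <= u c) -> beta <= u x.
Proof.
  intros Hx Hmin; destruct (Rle_lt_or_eq_dec 0 x (proj1 Hx)) as [Hx0 | <-].
  - assert (Hc : u1 x = 0).
    { apply (derive_zero_at_min u 0 r0 x); [lra | apply Hd1, Hx0 |].
      intros y Hy; apply Hmin; lra. }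
    assert (HE := energy_nonneg x Hx0); unfold energy in HE; rewrite Hc in HE.
    apply Hbelow; [apply Hpos; lra | lra |].
    apply Rnot_lt_le; intros Hf.
    assert (Hu2 : u2 x < 0) by (rewrite ode_u2, Hc by exact Hx0; lra).
    destruct (decreasing_after_critical u u1 x (u2 x)) as [d [Hd Hdec]];
      [intros y Hy; apply Hd1; lra | exact Hc | apply Hd2, Hx0 | exact Hu2 |].
    set (h := Rmin d (r0 - x) / 2).
    assert (0 < Rmin d (r0 - x)) by (apply Rmin_pos; lra).
    assert (Rmin d (r0 - x) <= d) by apply Rmin_l; assert (Rmin d (r0 - x) <= r0 - x) by apply Rmin_r.
    assert (A := Hdec h ltac:(unfold h; lra)); assert (B := Hmin (x + h) ltac:(unfold h; lra)); lra.
  - apply Hbelow; [apply Hpos; lra | exact Fu0_nonneg |].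
    apply Rnot_lt_le; intros Hf.
    destruct (u_below_u0_near0 Hf) as [d [Hd Hdec]].
    set (h := Rmin d r0 / 2).
    assert (0 < Rmin d r0) by (apply Rmin_pos; lra).
    assert (Rmin d r0 <= d) by apply Rmin_l; assert (Rmin d r0 <= r0) by apply Rmin_r.
    assert (A := Hdec h ltac:(unfold h; lra)); assert (B := Hmin h ltac:(unfold h; lra)); lra.
Qed.

Lemma u1_nonpos r0 : 0 < r0 -> u1 r0 <= 0.
Proof.
  intros Hr0; apply Rnot_lt_le; intros Hlt.
  destruct (derive_pos_local u r0 (u1 r0) (Hd1 r0 Hr0) Hlt) as [d [Hd Hloc]].
  set (h := Rmin d r0 / 2).
  assert (0 < Rmin d r0) by (apply Rmin_pos; lra).
  assert (Rmin d r0 <= d) by apply Rmin_l; assert (Rmin d r0 <= r0) by apply Rmin_r.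
  destruct (Hloc h ltac:(unfold h; lra)) as [Hleft _].
  destruct (attains_min_right u u1 0 u_right_cont Hd1 r0 ltac:(lra)) as [x [Hx Hmin]].
  assert (Hxr : x < r0).
  { destruct (Rle_lt_or_eq_dec x r0 (proj2 Hx)) as [| ->]; [auto |].
    assert (A := Hmin (r0 - h) ltac:(unfold h; lra)); lra. }
  assert (Hbx := threshold_le_at_min x r0 ltac:(lra) Hmin).
  assert (A := Hmin (r0 - h) ltac:(unfold h; lra)).
  assert (B := u_le_threshold r0 ltac:(lra)); lra.
Qed.

Lemma u_nonincreasing a b : 0 <= a <= b -> u b <= u a.
Proof.
  intros Hab; destruct (Rle_lt_or_eq_dec 0 a (proj1 Hab)) as [Ha | <-].
  - apply (ge_of_derive_nonpos u u1); [intros c Hc; apply Hd1; lra | lra |].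
    intros c Hc; apply u1_nonpos; lra.
  - destruct (Rle_lt_or_eq_dec 0 b (proj2 Hab)) as [Hb | <-]; [| lra].
    destruct (u_MVT0 b Hb) as [c [Hc E]].
    assert (u1 c <= 0) by (apply u1_nonpos; lra); nra.
Qed.

Lemma tail_signs : exists R1, 0 <= R1 /\ forall r, R1 < r ->
  om / 2 * u r <= u2 r /\ Gpq p q om (S m) (u r) < 0.
Proof.
  destruct (near_zero_signs p q om Hp Hpq Hom0) as [tau1 [Htau1 Hsmall1]].
  destruct (hpq_neg_near0 p q om Hp Hpq Hom0 (S m)) as [tau2 [Htau2 Hsmall2]].
  destruct (Hinf (Rmin tau1 tau2) ltac:(apply Rmin_pos; lra)) as [R1 HR1].
  exists (Rmax R1 0); split; [apply Rmax_r |]; intros r Hr.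
  assert (Hr1 : R1 < r) by (assert (HX := Rmax_l R1 0); lra).
  assert (Hr0 : 0 < r) by (assert (HX := Rmax_r R1 0); lra).
  assert (Hu : 0 < u r) by (apply Hpos; lra).
  assert (A := HR1 r Hr1); rewrite Rabs_right in A by lra.
  assert (Ht1 : Rmin tau1 tau2 <= tau1) by apply Rmin_l.
  assert (Ht2 : Rmin tau1 tau2 <= tau2) by apply Rmin_r.
  destruct (Hsmall1 (u r) ltac:(lra)) as [Hk _]; assert (Hh := Hsmall2 (u r) ltac:(lra)).
  split.
  - rewrite ode_u2 by exact Hr0; unfold f; rewrite fpq_kappa by lra.
    assert (0 <= INR m / r) by (apply Rmult_le_pos; [apply pos_INR | apply Rlt_le, Rinv_0_lt_compat; lra]).
    assert (Hn := u1_nonpos r Hr0); nra.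
  - rewrite Gpq_hpq by lra.
    assert (0 < u r ^ 2) by (apply pow_lt; lra); nra.
Qed.

(* Beyond [R1], [Q = u'^2 - c^2 u^2] is nonincreasing and tends to 0, hence [u' <= - c u]. *)
Lemma exp_decay : exists c R1, 0 < c /\ 0 <= R1 /\ forall r, R1 < r -> c * u r <= - u1 r.
Proof.
  destruct tail_signs as [R1 [HR1 Ht]].
  set (c := Rmin 1 (om / 2)).
  assert (Hc : 0 < c) by (apply Rmin_pos; lra).
  assert (Hc1 : c <= 1) by apply Rmin_l; assert (Hc2 : c <= om / 2) by apply Rmin_r.
  assert (Hcc : c * c <= om / 2) by nra.
  set (Q := fun x => u1 x * u1 x - c * c * (u x * u x)).
  assert (HQd : forall a b, R1 < a -> a <= b -> Q b <= Q a).
  { intros a b Ha Hab.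
    apply (ge_of_derive_nonpos Q
      (fun x => (u2 x * u1 x + u1 x * u2 x) - c * c * (u1 x * u x + u x * u1 x)));
      [| exact Hab |].
    - intros x Hx; apply derivable_pt_lim_minus; [apply derivable_pt_lim_mult; apply Hd2; lra |].
      apply derivable_pt_lim_scal, derivable_pt_lim_mult; apply Hd1; lra.
    - intros x Hx; destruct (Ht x ltac:(lra)) as [H1 _].
      assert (Hu := Hpos x ltac:(lra)); assert (Hn := u1_nonpos x ltac:(lra)).
      assert (0 <= u2 x - c * c * u x) by nra; nra. }
  assert (HQ : forall r, R1 < r -> 0 <= Q r).
  { intros r Hr; apply Rnot_lt_le; intros Hlt.
    destruct (Hinf (Rmin 1 (- Q r)) ltac:(apply Rmin_pos; lra)) as [M HM].
    set (s := Rmax M r + 1).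
    assert (Hs1 : M < s) by (unfold s; assert (HX := Rmax_l M r); lra).
    assert (Hs2 : r < s) by (unfold s; assert (HX := Rmax_r M r); lra).
    assert (B := HM s Hs1); assert (Hus : 0 < u s) by (apply Hpos; lra).
    rewrite Rabs_right in B by lra.
    assert (Hus1 : u s < 1) by (assert (Rmin 1 (- Q r) <= 1) by apply Rmin_l; lra).
    assert (HusQ : u s < - Q r) by (assert (Rmin 1 (- Q r) <= - Q r) by apply Rmin_r; lra).
    assert (C := HQd r s Hr ltac:(lra)).
    assert (- u s <= Q s); [| lra].
    unfold Q; assert (0 <= u1 s * u1 s) by nra.
    assert (c * c * (u s * u s) <= u s) by (assert (c * c <= 1) by nra; nra); lra. }
  exists c, R1; split; [exact Hc | split; [exact HR1 |]]; intros r Hr.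
  assert (A := HQ r Hr); unfold Q in A.
  assert (Hu := Hpos r ltac:(lra)); assert (Hn := u1_nonpos r ltac:(lra)).
  apply Rnot_lt_le; intros Hlt; nra.
Qed.

Lemma poly_decay : exists R2 Z, 0 < R2 /\ forall r, R2 <= r -> u r * r ^ S m <= Z.
Proof.
  destruct exp_decay as [c [R1 [Hc [HR1 Hcu]]]].
  set (R2 := Rmax R1 (INR (S m) / c) + 1).
  assert (HR2a : R1 < R2) by (unfold R2; assert (HX := Rmax_l R1 (INR (S m) / c)); lra).
  assert (HR2b : INR (S m) / c < R2) by (unfold R2; assert (HX := Rmax_r R1 (INR (S m) / c)); lra).
  exists R2, (u R2 * R2 ^ S m); split; [lra |]; intros r Hr.
  apply (ge_of_derive_nonpos (fun x => u x * x ^ S m)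
    (fun x => u1 x * x ^ S m + u x * (INR (S m) * x ^ Nat.pred (S m)))); [| exact Hr |].
  - intros x Hx; apply derivable_pt_lim_mult; [apply Hd1; lra | apply derivable_pt_lim_pow].
  - intros x Hx; assert (A1 := Hcu x ltac:(lra)); assert (Hu := Hpos x ltac:(lra)).
    assert (Hxm : 0 < x ^ m) by (apply pow_lt; lra).
    simpl Nat.pred; simpl pow.
    assert (Hxc : INR (S m) <= c * x).
    { assert (INR (S m) / c * c <= x * c) by (apply Rmult_le_compat_r; lra).
      replace (INR (S m) / c * c) with (INR (S m)) in H by (field; lra); lra. }
    assert (u1 x * x <= - c * u x * x) by nra.
    assert (0 <= u x * x ^ m) by nra; nra.
Qed.

(* [u'] is nondecreasing beyond [R1] (as [u'' > 0]) and [u] drops by at most [beta]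
   on any interval of length 1. *)
Lemma u1_bounded_far : exists R1, 0 <= R1 /\ forall r, R1 + 1 < r -> - u1 r <= beta.
Proof.
  destruct tail_signs as [R1 [HR1 Ht]]; exists R1; split; [exact HR1 |]; intros r Hr.
  destruct (MVT_cor2 u u1 (r - 1) r ltac:(lra)) as [c [Ec Hc]].
  { intros x Hx; apply Hd1; lra. }
  assert (u1 c <= u1 r).
  { apply (le_of_derive_nonneg u1 u2); [intros x Hx; apply Hd2; lra | lra |].
    intros x Hx; destruct (Ht x ltac:(lra)) as [H1 _]; assert (Hu := Hpos x ltac:(lra)); nra. }
  assert (Hb := u_le_threshold (r - 1) ltac:(lra)); assert (Hu := Hpos r ltac:(lra)); lra.
Qed.

Lemma pohozaev_far delta A : 0 < delta -> exists R, A < R /\ - delta < pohozaev R.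
Proof.
  intros Hdel.
  destruct u1_bounded_far as [R1 [HR1 Hu1]].
  destruct poly_decay as [R2 [Z [HR2 HZ]]].
  assert (HZ0 : 0 <= Z) by (assert (H := HZ R2 ltac:(lra)); assert (0 < u R2) by (apply Hpos; lra);
    assert (0 < R2 ^ S m) by (apply pow_lt; lra); nra).
  set (Cst := Rabs (INR (S m) - 2) * beta * Z).
  assert (HCst : 0 <= Cst) by (unfold Cst; assert (HN := Rabs_pos (INR (S m) - 2));
    apply Rmult_le_pos; [apply Rmult_le_pos |]; lra).
  set (R := Rmax (Rmax A (Rmax R1 R2 + 1)) (Cst / delta) + 1).
  assert (HRa : A < R /\ Rmax R1 R2 + 1 < R /\ Cst / delta < R).
  { unfold R; assert (HX := Rmax_l (Rmax A (Rmax R1 R2 + 1)) (Cst / delta)).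
    assert (HY := Rmax_r (Rmax A (Rmax R1 R2 + 1)) (Cst / delta)).
    assert (HZ1 := Rmax_l A (Rmax R1 R2 + 1)); assert (HZ2 := Rmax_r A (Rmax R1 R2 + 1)); lra. }
  assert (HR12 : R1 <= Rmax R1 R2 /\ R2 <= Rmax R1 R2) by (split; [apply Rmax_l | apply Rmax_r]).
  exists R; split; [lra |].
  assert (HR0 : 0 < R) by lra.
  assert (Hu1R := Hu1 R ltac:(lra)).
  assert (HuR : u R * R ^ S m <= Z) by (apply HZ; lra).
  assert (HE := energy_nonneg R HR0); unfold energy in HE.
  assert (Hn := u1_nonpos R HR0).
  assert (HuRpos : 0 < u R) by (apply Hpos; lra).
  assert (Hm0 : 0 < R ^ m) by (apply pow_lt; lra).
  assert (Hterm : Rabs ((INR (S m) - 2) * (R ^ m * (u R * u1 R))) * R <= Cst).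
  { rewrite !Rabs_mult, (Rabs_right (R ^ m)), (Rabs_right (u R)), (Rabs_left1 (u1 R)) by lra.
    simpl pow in HuR; unfold Cst.
    assert (R ^ m * (u R * - u1 R) * R <= Z * beta).
    { replace (R ^ m * (u R * - u1 R) * R) with ((R * R ^ m * u R) * (- u1 R)) by ring.
      apply Rmult_le_compat; try lra; assert (0 <= R * R ^ m * u R) by (repeat apply Rmult_le_pos; lra); lra. }
    assert (HN := Rabs_pos (INR (S m) - 2)).
    assert (0 <= R ^ m * (u R * - u1 R)) by (apply Rmult_le_pos; [lra | apply Rmult_le_pos; lra]); nra. }
  assert (Hfirst : 0 <= R ^ S m * (u1 R * u1 R + 2 * F (u R))).
  { apply Rmult_le_pos; [apply pow_le; lra | lra]. }
  assert (HA := Rle_abs (- ((INR (S m) - 2) * (R ^ m * (u R * u1 R))))); rewrite Rabs_Ropp in HA.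
  assert (Cst < delta * R).
  { apply Rmult_lt_reg_r with (/ delta); [apply Rinv_0_lt_compat; lra |].
    replace (delta * R * / delta) with R by (field; lra); lra. }
  assert (Rabs ((INR (S m) - 2) * (R ^ m * (u R * u1 R))) < delta).
  { apply Rmult_lt_reg_r with R; [lra | lra]. }
  unfold pohozaev; lra.
Qed.

Hypothesis Hpersist : forall t t', 0 < t -> t <= t' -> t' <= beta ->
  0 < Gpq p q om (S m) t -> 0 < Gpq p q om (S m) t'.

Let G (s : R) : R := s ^ m * Gpq p q om (S m) (u s).

Lemma pohozaev_derive_on x y : 0 < x -> forall c, x <= c <= y -> derivable_pt_lim pohozaev c (G c).
Proof. intros Hx c Hc; apply pohozaev_derive; lra. Qed.

(* [P] increases on (0, r] from [P(0+) = 0]. *)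
Lemma pohozaev_pos_before r : 0 < r -> 0 < Gpq p q om (S m) (u r) -> 0 < pohozaev r.
Proof.
  intros Hr HGr.
  assert (HG : forall s, 0 < s <= r -> 0 < G s).
  { intros s Hs; apply Rmult_lt_0_compat; [apply pow_lt; lra |].
    apply (Hpersist (u r) (u s)); [apply Hpos; lra | apply u_nonincreasing; lra |
      apply u_le_threshold; lra | exact HGr]. }
  assert (A : pohozaev (r / 2) < pohozaev r).
  { apply (lt_of_derive_pos pohozaev G); [apply (pohozaev_derive_on (r / 2)); lra | lra |].
    intros c Hc; apply HG; lra. }
  assert (B : 0 <= pohozaev (r / 2)); [| lra].
  apply nonneg_of_nondecreasing_near0; [| exact pohozaev_near0 | lra].
  intros x y Hx Hy; apply (le_of_derive_nonneg pohozaev G); [apply (pohozaev_derive_on x); lra | lra |].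
  intros c Hc; apply Rlt_le, HG; lra.
Qed.

(* [P] is nonincreasing on [r, +oo), strictly decreasing far out, and [P(+oo) = 0]. *)
Lemma pohozaev_pos_after r : 0 < r -> Gpq p q om (S m) (u r) <= 0 -> 0 < pohozaev r.
Proof.
  intros Hr HGr.
  assert (HG : forall s, r <= s -> G s <= 0).
  { intros s Hs; unfold G; assert (0 < s ^ m) by (apply pow_lt; lra).
    assert (Gpq p q om (S m) (u s) <= 0); [| nra].
    apply Rnot_lt_le; intros HGs.
    assert (0 < Gpq p q om (S m) (u r)); [| lra].
    apply (Hpersist (u s) (u r)); [apply Hpos; lra | apply u_nonincreasing; lra |
      apply u_le_threshold; lra | exact HGs]. }
  destruct tail_signs as [R1 [HR1 Ht]].
  set (R3 := Rmax r R1 + 1).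
  assert (HR3 : r < R3 /\ R1 < R3) by (unfold R3; assert (HX := Rmax_l r R1);
    assert (HY := Rmax_r r R1); lra).
  assert (A : pohozaev R3 <= pohozaev r).
  { apply (ge_of_derive_nonpos pohozaev G); [apply (pohozaev_derive_on r); lra | lra |].
    intros c Hc; apply HG; lra. }
  assert (B : pohozaev (R3 + 1) < pohozaev R3).
  { apply (gt_of_derive_neg pohozaev G); [apply (pohozaev_derive_on R3); lra | lra |].
    intros c Hc; unfold G; assert (0 < c ^ m) by (apply pow_lt; lra).
    destruct (Ht c ltac:(lra)) as [_ HGc]; nra. }
  assert (C : 0 <= pohozaev (R3 + 1)); [| lra].
  apply nonneg_of_nonincreasing_far; [| intros delta A' Hdel; now apply pohozaev_far].
  intros x y Hxy; apply (ge_of_derive_nonpos pohozaev G); [apply (pohozaev_derive_on x); lra | lra |].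
  intros c Hc; apply HG; lra.
Qed.

Lemma pohozaev_pos r : 0 < r -> 0 < pohozaev r.
Proof.
  intros Hr; destruct (Rlt_or_le 0 (Gpq p q om (S m) (u r))).
  - now apply pohozaev_pos_before.
  - now apply pohozaev_pos_after.
Qed.

End BelowThreshold.

End RadialODE.

Theorem corollary3p2 (n : nat) (p q omega : R) (u u1 u2 : R -> R)
  (Hn : (1 <= n)%nat) (Hp : 1 < p) (Hpq : p < q)
  (Hom0 : 0 < omega) (Hom : omega < omega_pq p q)
  (* u is a positive function on [0, oo) *)
  (Hpos : forall r, 0 <= r -> 0 < u r)
  (* u is twice differentiable on (0, oo) with u' = u1, u'' = u2 *)
  (Hd1 : forall r, 0 < r -> derivable_pt_lim u r (u1 r))
  (Hd2 : forall r, 0 < r -> derivable_pt_lim u1 r (u2 r))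
  (* the ODE *)
  (Hode : forall r, 0 < r ->
     u2 r + (INR n - 1) / r * u1 r + fnl omega p q (u r) = 0)
  (* u'(0) = 0 (right derivative at 0) *)
  (H0 : forall eps, 0 < eps -> exists delta, 0 < delta /\
     forall h, 0 < h < delta -> Rabs ((u h - u 0) / h) < eps)
  (* u(r) -> 0 as r -> oo *)
  (Hinf : forall eps, 0 < eps -> exists M, forall r, M < r -> Rabs (u r) < eps) :
  forall r, 0 < r -> Pfun n omega p q u u1 r > 0.
Proof.
  intros r Hr.
  destruct (kappa_root p q omega Hp Hpq Hom0 Hom) as [c [beta [Hcb [Hkc Hkb]]]].
  assert (Hfb := fpq_root p q omega Hp Hpq c beta Hcb Hkb).
  assert (HFb := Fpq_root_pos p q omega Hp Hpq Hom0 c beta Hcb Hkc Hkb Hom).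
  destruct n as [| m]; [lia |].
  rewrite (Pfun_pohozaev m p q omega u u1 Hpos r Hr).
  apply (pohozaev_pos m p q omega u u1 u2 Hp Hpq Hom0 Hpos Hd1 Hd2 Hode H0 Hinf beta);
    [lra | | | | exact Hr].
  - exact (fpq_neg_above_root p q omega Hp Hpq c beta Hcb Hkc Hkb).
  - exact (root_le_of_Fpq_nonneg p q omega Hp Hpq Hom0 beta Hkb).
  - intros t t'; apply (Gpq_pos_persists p q omega Hp Hpq Hom0 (S m) beta t t' Hn); lra.
Qed.
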